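(* Let $n\in\mathbb{N}$, $d_0,d_1,\dots,d_n\in\mathbb{N}$, $f_i\in C(\mathbb{R}^{d_i},\mathbb{R}^{d_{i-1}})$ for $i\in\{1,\dots,n\}$, and $\phi_1,\dots,\phi_n\in\mathbf{N}$ with $f_i=\mathcal{R}(\phi_i)$ for all $i\in\{1,\dots,n\}$. Then $$\Big|\Big|\Big|\bigodot_{i=1}^n\mathcal{D}(\phi_i)\Big|\Big|\Big|\le\max\big\{|||\mathcal{D}(\phi_1)|||,\dots,|||\mathcal{D}(\phi_n)|||,2d_1,2d_2,\dots,2d_{n-1}\big\}.$$
   Context: $\mathbf{A}_k\colon\mathbb{R}^k\to\mathbb{R}^k$ is the componentwise ReLU. $\mathbf{D}=\bigcup_{H\in\mathbb{N}}\mathbb{N}^{H+2}$; $\mathbf{N}=\bigcup_{H\in\mathbb{N}}\bigcup_{(k_0,\dots,k_{H+1})\in\mathbb{N}^{H+2}}\prod_{m=1}^{H+1}(\mathbb{R}^{k_m\times k_{m-1}}\times\mathbb{R}^{k_m})$. For $\Phi=((W_1,B_1),\dots,(W_{H+1},B_{H+1}))$ with $W_m\in\mathbb{R}^{k_m\times k_{m-1}}$, $B_m\in\mathbb{R}^{k_m}$: $\mathcal{D}(\Phi)=(k_0,\dots,k_{H+1})\in\mathbf{D}$ and $\mathcal{R}(\Phi)\in C(\mathbb{R}^{k_0},\mathbb{R}^{k_{H+1}})$, $(\mathcal{R}(\Phi))(x_0)=W_{H+1}x_H+B_{H+1}$ with $x_m=\mathbf{A}_{k_m}(W_mx_{m-1}+B_m)$,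 $m=1,\dots,H$. For $x=(x_1,\dots,x_k)$, $|||x|||=\max_i|x_i|$. The operation $\odot\colon\mathbf{D}\times\mathbf{D}\to\mathbf{D}$: for $\alpha=(\alpha_0,\dots,\alpha_{H_1+1})$, $\beta=(\beta_0,\dots,\beta_{H_2+1})$, $\alpha\odot\beta=(\beta_0,\beta_1,\dots,\beta_{H_2},\beta_{H_2+1}+\alpha_0,\alpha_1,\dots,\alpha_{H_1+1})$; $\odot$ is associative and $\bigodot_{i=1}^n\alpha_i=\alpha_1\odot\alpha_2\odot\dots\odot\alpha_n$. *)

From HB Require Import structures.
From mathcomp Require Import all_boot all_order all_algebra.
From mathcomp Require Import all_classical all_reals all_analysis.
Set Implicit Arguments. Unset Strict Implicit. Unset Printing Implicit Defensive.
Import Order.TTheory GRing.Theory Num.Theory.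
Local Open Scope ring_scope.

Section Nets.
Variable R : realType.

Definition relu (k : nat) (x : 'cV[R]_k) : 'cV[R]_k := map_mx (fun t => Num.max t 0) x.

Inductive layers : nat -> nat -> Type :=
| LOut (k0 k1 : nat) : 'M[R]_(k1, k0) -> 'cV[R]_k1 -> layers k0 k1
| LCons (k0 k1 k2 : nat) : 'M[R]_(k1, k0) -> 'cV[R]_k1 -> layers k1 k2 -> layers k0 k2.

Fixpoint arch (k0 k : nat) (L : layers k0 k) : seq nat :=
  match L with
  | @LOut a b _ _ => [:: a; b]
  | @LCons a _ _ _ _ L' => a :: arch L'
  end.

Fixpoint realize_layers (k0 k : nat) (L : layers k0 k) : 'cV[R]_k0 -> 'cV[R]_k :=
  match L with
  | LOut _ _ W B => fun x => W *m x + B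
  | LCons _ _ _ W B L' => fun x => realize_layers L' (relu (W *m x + B))
  end.

(* The set N of networks: H in N = {1,2,...} (so at least two layers, H+2 >= 3
   entries in the architecture) and all widths k_m in N = {1,2,...}. *)
Record net : Type := Net {
  net_in : nat;
  net_out : nat;
  net_layers : layers net_in net_out;
  net_wf : (3 <= size (arch net_layers))%N && all (fun k => 0 < k)%N (arch net_layers)
}.

Definition Dim (phi : net) : seq nat := arch (net_layers phi).

Definition realization (phi : net) : 'cV[R]_(net_in phi) -> 'cV[R]_(net_out phi) :=
  realize_layers (net_layers phi).

(* "g = R(phi)" for g : R^din -> R^dout, as an equality of functions including
   their domain and codomain. *)
Definition realizes (phi : net) (din dout : nat) (g : 'cV[R]_din -> 'cV[R]_dout) : Prop :=
  existT (fun p : nat * nat => 'cV[R]_p.1 -> 'cV[R]_p.2) (din, dout) g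
  = existT (fun p : nat * nat => 'cV[R]_p.1 -> 'cV[R]_p.2) (net_in phi, net_out phi) (@realization phi).

End Nets.

(* alpha ⊙ beta = (beta_0, ..., beta_{H2}, beta_{H2+1} + alpha_0, alpha_1, ..., alpha_{H1+1})
   (junk value on empty alpha, which never arises for elements of D). *)
Definition dcomp (alpha beta : seq nat) : seq nat :=
  match alpha with
  | [::] => beta
  | a0 :: atl => take (size beta).-1 beta ++ ((last 0%N beta + a0)%N :: atl)
  end.

(* bigodot_{i=1}^n alpha_i = alpha_1 ⊙ (alpha_2 ⊙ (... ⊙ alpha_n)) (⊙ is associative). *)
Fixpoint bigodot (s : seq (seq nat)) : seq nat :=
  match s with
  | [::] => [::]
  | [:: a] => a
  | a :: s' => dcomp a (bigodot s')
  end.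

Definition maxnorm (s : seq nat) : nat := \max_(x <- s) x.

From Pilot Require Import Defs.
From HB Require Import structures.
From mathcomp Require Import all_boot all_order all_algebra.
From mathcomp Require Import all_classical all_reals all_analysis.
Import Order.TTheory GRing.Theory Num.Theory.
Local Open Scope ring_scope.

(* The architecture of a network realizing a map R^d_i -> R^d_(i-1) starts with
   d_i and ends with d_(i-1).  In the composite architecture the end d_i of the
   (i+1)-st factor and the start d_i of the i-th factor are merged into the
   single entry 2 d_i; every other entry is an entry of one of the factors. *)

Lemma arch_rcons (R : realType) (k0 k : nat) (L : layers R k0 k) :
  exists mid, arch L = k0 :: rcons mid k.
Proof.
elim: L => [a b W B | a b c W B L [mid IH]] /=; first by exists [::].
by rewrite IH; exists (b :: mid).
Qed.

Lemma Dim_realizes (R : realType) (phi : net R) (din dout : nat)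
    (g : 'cV[R]_din -> 'cV[R]_dout) :
  realizes phi g -> exists mid, Dim phi = din :: rcons mid dout.
Proof.
move=> /(f_equal (@projT1 _ _)) /= [-> ->].
exact: arch_rcons.
Qed.

Local Open Scope nat_scope.

Lemma maxnorm_cons (a : nat) (s : seq nat) :
  maxnorm (a :: s) = maxn a (maxnorm s).
Proof. by rewrite /maxnorm big_cons. Qed.

Lemma maxnorm_cat (s t : seq nat) :
  maxnorm (s ++ t) = maxn (maxnorm s) (maxnorm t).
Proof. by rewrite /maxnorm big_cat. Qed.

Lemma maxnorm_rcons (s : seq nat) (b : nat) :
  maxnorm (rcons s b) = maxn (maxnorm s) b.
Proof. by rewrite /maxnorm -cats1 big_cat big_seq1. Qed.

(* Unqualified, [dcomp] would resolve to MathComp-Analysis's derivative of a composite. *)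
Lemma dcomp_rcons (a : nat) (atl s : seq nat) (b : nat) :
  Defs.dcomp (a :: atl) (rcons s b) = s ++ (b + a) :: atl.
Proof. by rewrite /= size_rcons last_rcons -cats1 take_size_cat. Qed.

Lemma bigodot_iotaS (alpha : nat -> seq nat) (k m : nat) :
  bigodot [seq alpha i | i <- iota k m.+2]
  = Defs.dcomp (alpha k) (bigodot [seq alpha i | i <- iota k.+1 m.+1]).
Proof. by []. Qed.

Section Chain.

Variables (alpha : nat -> seq nat) (d : nat -> nat).

Lemma bigodot_chain_rcons {k m : nat} :
  (forall i, k <= i <= k + m -> exists mid, alpha i = d i :: rcons mid (d i.-1)) ->
  exists s, bigodot [seq alpha i | i <- iota k m.+1] = rcons s (d k.-1).
Proof.
elim: m k => [|m IH] k shape.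
  have [|mid alpha_k] := shape k; first by rewrite addn0 leqnn.
  by exists (d k :: mid); rewrite /= alpha_k.
have [|s rest] := IH k.+1.
  by move=> i /andP[ki im]; apply: shape; rewrite ltnW //= -addSnnS.
have [|mid alpha_k] := shape k; first by rewrite leqnn leq_addr.
exists (s ++ (d k + d k) :: mid).
by rewrite bigodot_iotaS rest alpha_k dcomp_rcons rcons_cat.
Qed.

Lemma maxnorm_bigodot_chain (k m M : nat) :
  (forall i, k <= i <= k + m -> exists mid, alpha i = d i :: rcons mid (d i.-1)) ->
  (forall i, k <= i <= k + m -> maxnorm (alpha i) <= M) ->
  (forall j, k <= j < k + m -> 2 * d j <= M) ->
  maxnorm (bigodot [seq alpha i | i <- iota k m.+1]) <= M.
Proof.
elim: m k => [|m IH] k shape bound glue; first by rewrite /= bound ?addn0 ?leqnn.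
have shapeS i : k.+1 <= i <= k.+1 + m -> exists mid, alpha i = d i :: rcons mid (d i.-1).
  by case/andP=> ki im; apply: shape; rewrite ltnW //= -addSnnS.
have [s rest] := bigodot_chain_rcons shapeS.
have [|mid alpha_k] := shape k; first by rewrite leqnn leq_addr.
have rest_le : maxnorm (rcons s (d k)) <= M.
  rewrite -rest; apply: IH shapeS _ _ => [i /andP[ki im] | j /andP[kj jm]].
    by apply: bound; rewrite ltnW //= -addSnnS.
  by apply: glue; rewrite ltnW //= -addSnnS.
have alpha_k_le : maxnorm (d k :: rcons mid (d k.-1)) <= M.
  by rewrite -alpha_k bound // leqnn leq_addr.
have glue_k : d k + d k <= M by rewrite addnn -mul2n glue // leqnn addnS ltnS leq_addr.
move: rest_le alpha_k_le; rewrite maxnorm_rcons maxnorm_cons !geq_max.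
rewrite bigodot_iotaS rest alpha_k dcomp_rcons maxnorm_cat maxnorm_cons !geq_max glue_k.
by case/andP=> -> _ /andP[_ ->].
Qed.

End Chain.

Theorem lemma5p10 (R : realType) (n : nat) (d : nat -> nat)
  (f : forall i : nat, 'cV[R]_(d i) -> 'cV[R]_(d i.-1))
  (phi : nat -> net R) :
  (1 <= n)%N ->
  (forall i : nat, (i <= n)%N -> (0 < d i)%N) ->
  (forall i : nat, (1 <= i <= n)%N -> continuous (f i : 'cV[R^o]_(d i) -> 'cV[R^o]_(d i.-1))) ->
  (forall i : nat, (1 <= i <= n)%N -> realizes (phi i) (f i)) ->
  (maxnorm (bigodot [seq Dim (phi i) | i <- iota 1 n])
   <= maxn (\max_(1 <= i < n.+1) maxnorm (Dim (phi i)))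
           (\max_(1 <= i < n) (2 * d i)))%N.
Proof.
case: n => // m _ _ _ realizes_f.
apply: (maxnorm_bigodot_chain _ d); rewrite add1n.
- by move=> i /realizes_f /Dim_realizes.
- move=> i i_range; apply: leq_trans (leq_maxl _ _).
  by apply: leq_bigmax_seq => //; rewrite mem_index_iota.
- move=> j j_range; apply: leq_trans (leq_maxr _ _).
  by apply: leq_bigmax_seq => //; rewrite mem_index_iota.
Qed.
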